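(* Let $\mathcal P$ be as in the context. Let $\mathcal P'$ be the set of $(\mathbf x',\mathbf y')=((x'_1,\dots,x'_T),(y'_1,\dots,y'_T))\in\mathbb R_+^T\times\{0,1\}^T$ satisfying: $-y'_{T-t+2}+y'_{T-t+1}-y'_{T-k+1}\le 0$ for all $t\in[2,T]_{\mathbb Z}$, $k\in[t,\min\{T,t+L-1\}]_{\mathbb Z}$; $y'_{T-t+2}-y'_{T-t+1}+y'_{T-k+1}\le 1$ for all $t\in[2,T]_{\mathbb Z}$, $k\in[t,\min\{T,t+\ell-1\}]_{\mathbb Z}$; $-x'_{T-t+1}+\underline C y'_{T-t+1}\le 0$ and $x'_{T-t+1}-\overline C y'_{T-t+1}\le 0$ for all $t\in[1,T]_{\mathbb Z}$; $x'_{T-t+1}-x'_{T-t+2}\le Vy'_{T-t+2}+\overline V(1-y'_{T-t+2})$ for all $t\in[2,T]_{\mathbb Z}$; $x'_{T-t+2}-x'_{T-t+1}\le Vy'_{T-t+1}+\overline V(1-y'_{T-t+1})$ for all $t\in[2,T]_{\mathbb Z}$. Then $\mathcal P=\mathcal P'$ (as subsets of $\mathbb R^{T}\times\mathbb R^{T}$).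
   Context: For integers $a,b$, $[a,b]_{\mathbb Z}=\{a,a+1,\dots,b\}$ if $a\le b$ and $\emptyset$ otherwise. Fix a positive integer $T$, positive integers $L$ (minimum up time) and $\ell$ (minimum down time), and reals $\overline C,\underline C,V,\overline V$ with $\overline C>\underline C>0$, $V>0$, $\overline V+V\le\overline C$ and $\underline C<\overline V<\underline C+V$. $\mathcal P$ is the set of $(\mathbf x,\mathbf y)=((x_1,\dots,x_T),(y_1,\dots,y_T))\in\mathbb R_+^T\times\{0,1\}^T$ satisfying: (i) $-y_{t-1}+y_t-y_k\le 0$ for all $t\in[2,T]_{\mathbb Z}$, $k\in[t,\min\{T,t+L-1\}]_{\mathbb Z}$; (ii) $y_{t-1}-y_t+y_k\le 1$ for all $t\in[2,T]_{\mathbb Z}$, $k\in[t,\min\{T,t+\ell-1\}]_{\mathbb Z}$; (iii) $-x_t+\underline C y_t\le 0$ and $x_t-\overline C y_t\le 0$ for all $t\in[1,T]_{\mathbb Z}$; (iv) $x_t-x_{t-1}\le Vy_{t-1}+\overline V(1-y_{t-1})$ for all $t\in[2,T]_{\mathbb Z}$; (v) $x_{t-1}-x_t\le Vy_t+\overline V(1-y_t)$ for all $t\in[2,T]_{\mathbb Z}$. *)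

(* Vectors in R^T are represented as functions nat -> R,
   only coordinates 1..T are meaningful (the constraints only mention them). *)
From HB Require Import structures.
From mathcomp Require Import all_boot all_order all_algebra.
Set Implicit Arguments. Unset Strict Implicit. Unset Printing Implicit Defensive.
Import Order.TTheory GRing.Theory Num.Theory.
Local Open Scope ring_scope.

Definition inP (R : realFieldType) (T L l : nat) (Cu Cl V Vb : R)
  (x y : nat -> R) : Prop :=
  (forall t, (1 <= t <= T)%N -> 0 <= x t /\ (y t = 0 \/ y t = 1)) /\
  (forall t k, (2 <= t <= T)%N -> (t <= k <= minn T (t + L - 1))%N ->
     - y (t - 1)%N + y t - y k <= 0) /\
  (forall t k, (2 <= t <= T)%N -> (t <= k <= minn T (t + l - 1))%N ->
     y (t - 1)%N - y t + y k <= 1) /\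
  (forall t, (1 <= t <= T)%N -> - x t + Cl * y t <= 0 /\ x t - Cu * y t <= 0) /\
  (forall t, (2 <= t <= T)%N ->
     x t - x (t - 1)%N <= V * y (t - 1)%N + Vb * (1 - y (t - 1)%N)) /\
  (forall t, (2 <= t <= T)%N ->
     x (t - 1)%N - x t <= V * y t + Vb * (1 - y t)).

Definition inP' (R : realFieldType) (T L l : nat) (Cu Cl V Vb : R)
  (x y : nat -> R) : Prop :=
  (forall t, (1 <= t <= T)%N -> 0 <= x t /\ (y t = 0 \/ y t = 1)) /\
  (forall t k, (2 <= t <= T)%N -> (t <= k <= minn T (t + L - 1))%N ->
     - y (T - t + 2)%N + y (T - t + 1)%N - y (T - k + 1)%N <= 0) /\
  (forall t k, (2 <= t <= T)%N -> (t <= k <= minn T (t + l - 1))%N ->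
     y (T - t + 2)%N - y (T - t + 1)%N + y (T - k + 1)%N <= 1) /\
  (forall t, (1 <= t <= T)%N ->
     - x (T - t + 1)%N + Cl * y (T - t + 1)%N <= 0 /\
     x (T - t + 1)%N - Cu * y (T - t + 1)%N <= 0) /\
  (forall t, (2 <= t <= T)%N ->
     x (T - t + 1)%N - x (T - t + 2)%N
       <= V * y (T - t + 2)%N + Vb * (1 - y (T - t + 2)%N)) /\
  (forall t, (2 <= t <= T)%N ->
     x (T - t + 2)%N - x (T - t + 1)%N
       <= V * y (T - t + 1)%N + Vb * (1 - y (T - t + 1)%N)).

(* Reading the horizon backwards maps P' onto P, so it suffices to show that P is
   invariant under time reversal.  Pointwise bounds and the two ramp constraints are
   exchanged by the reversal; the minimum up-time constraint is not symmetric as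
   written, but for binary y it says that two off-periods at distance at most L have
   no on-period between them, which is symmetric.  Minimum down-time is minimum
   up-time for 1 - y. *)
From HB Require Import structures.
From mathcomp Require Import all_boot all_order all_algebra.
From mathcomp Require Import zify lra.
Import Order.TTheory GRing.Theory Num.Theory.
Local Open Scope ring_scope.

Set Implicit Arguments. Unset Strict Implicit.

Section TimeReversal.
Variables (R : realFieldType) (T : nat).

Definition binary (w : nat -> R) := forall t, (1 <= t <= T)%N -> w t = 0 \/ w t = 1.

Definition min_up (L : nat) (w : nat -> R) := forall t k, (2 <= t <= T)%N ->
  (t <= k <= minn T (t + L - 1))%N -> - w (t - 1)%N + w t - w k <= 0.

Definition min_down (l : nat) (w : nat -> R) := forall t k, (2 <= t <= T)%N ->
  (t <= k <= minn T (t + l - 1))%N -> w (t - 1)%N - w t + w k <= 1.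

Definition no_short_on_run (L : nat) (w : nat -> R) := forall p m q,
  (1 <= p < m)%N -> (m < q <= T)%N -> (q <= p + L)%N ->
  w p = 0 -> w q = 0 -> w m = 0.

Definition time_rev (w : nat -> R) : nat -> R := fun i => w (T - i + 1)%N.

Lemma time_revK w t : (1 <= t <= T)%N -> time_rev (time_rev w) t = w t.
Proof. by move=> ht; rewrite /time_rev; congr w; lia. Qed.

Lemma binary_rev w : binary w -> binary (time_rev w).
Proof. by move=> hw t ht; apply: hw; lia. Qed.

Lemma binary_compl w : binary w -> binary (fun i => 1 - w i).
Proof. by move=> hw t /hw[] ->; [right | left]; rewrite ?subr0 ?subrr. Qed.

Lemma min_up_no_short_on_run L w : binary w -> min_up L w -> no_short_on_run L w.
Proof.
move=> hw hup p m q hpm hmq hqL wp wq.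
have [//|wm1] : w m = 0 \/ w m = 1 by apply: hw; lia.
(* Walk back from m to the start-up of its on-run; min_up keeps the unit on until q. *)
exfalso; elim: m hpm hmq wm1 => [|m IH] hpm hmq wm1; first by lia.
have [wm|wm] : w m = 0 \/ w m = 1 by apply: hw; lia.
- have := hup m.+1 q ltac:(lia) ltac:(lia).
  by rewrite subn1 /= wm wm1 wq; lra.
- have [epm|npm] := eqVneq m p; first by move: wm; rewrite epm wp; lra.
  by apply: IH => //; lia.
Qed.

Lemma no_short_on_run_min_up L w : binary w -> no_short_on_run L w -> min_up L w.
Proof.
move=> hw hrun t k ht hk.
have [b|b] := hw t ltac:(lia); have [c|c] := hw k ltac:(lia);
  have [a|a] := hw (t - 1)%N ltac:(lia); rewrite a b c; try lra.
have [etk|ntk] := eqVneq t k; first by move: b; rewrite etk c; lra.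
by have := hrun (t - 1)%N t k ltac:(lia) ltac:(lia) ltac:(lia) a c; rewrite b; lra.
Qed.

Lemma no_short_on_run_rev L w : no_short_on_run L w -> no_short_on_run L (time_rev w).
Proof.
move=> hrun p m q hpm hmq hqL wp wq.
by apply: (hrun (T - q + 1)%N _ (T - p + 1)%N) => //; lia.
Qed.

Lemma min_up_rev L w : binary w -> min_up L w -> min_up L (time_rev w).
Proof.
move=> hw hup; apply: no_short_on_run_min_up; first exact: binary_rev.
by apply: no_short_on_run_rev; apply: min_up_no_short_on_run.
Qed.

Lemma min_downE l w : min_down l w <-> min_up l (fun i => 1 - w i).
Proof. by split=> h t k ht hk; have := h t k ht hk; lra. Qed.

Lemma min_down_rev l w : binary w -> min_down l w -> min_down l (time_rev w).
Proof.
move=> hw /min_downE hdown; apply/min_downE.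
exact: (min_up_rev (binary_compl hw) hdown).
Qed.

Variables (L l : nat) (Cu Cl V Vb : R).

Lemma inP_rev x y :
  inP T L l Cu Cl V Vb x y -> inP T L l Cu Cl V Vb (time_rev x) (time_rev y).
Proof.
case=> h0 [hup [hdown [h3 [h4 h5]]]].
have hy : binary y by move=> t /h0[].
have shift t : (2 <= t <= T)%N -> (T - t + 1 = T - (t - 1) + 1 - 1)%N by lia.
do ![apply: conj].
- by move=> t ht; rewrite /time_rev; apply: h0; lia.
- exact: min_up_rev.
- exact: min_down_rev.
- by move=> t ht; rewrite /time_rev; apply: h3; lia.
- by move=> t ht; rewrite /time_rev (shift t ht); apply: h5; lia.
- by move=> t ht; rewrite /time_rev (shift t ht); apply: h4; lia.
Qed.

Lemma eq_inP x y x' y' :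
  (forall t, (1 <= t <= T)%N -> x t = x' t) ->
  (forall t, (1 <= t <= T)%N -> y t = y' t) ->
  inP T L l Cu Cl V Vb x y -> inP T L l Cu Cl V Vb x' y'.
Proof.
move=> ex ey [h0 [h1 [h2 [h3 [h4 h5]]]]].
do ![apply: conj].
- by move=> t ht; rewrite -!ex -?ey //; apply: h0.
- by move=> t k ht hk; rewrite -!ey; try lia; apply: h1.
- by move=> t k ht hk; rewrite -!ey; try lia; apply: h2.
- by move=> t ht; rewrite -!ex -?ey //; apply: h3.
- by move=> t ht; rewrite -!ex -?ey; try lia; apply: h4.
- by move=> t ht; rewrite -!ex -?ey; try lia; apply: h5.
Qed.

Lemma inP'E x y :
  inP' T L l Cu Cl V Vb x y <-> inP T L l Cu Cl V Vb (time_rev x) (time_rev y).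
Proof.
have e t : (2 <= t <= T)%N -> (T - (t - 1) + 1 = T - t + 2)%N by lia.
rewrite /inP /inP' /time_rev.
split=> -[h0 [h1 [h2 [h3 [h4 h5]]]]]; do ![apply: conj] => //.
- by move=> t ht; apply: h0; lia.
- by move=> t k ht hk; rewrite e //; apply: h1.
- by move=> t k ht hk; rewrite e //; apply: h2.
- by move=> t ht; rewrite e //; apply: h4.
- by move=> t ht; rewrite e //; apply: h5.
- by move=> t ht; rewrite -(time_revK x ht) -(time_revK y ht); apply: h0; lia.
- by move=> t k ht hk; rewrite -e //; apply: h1.
- by move=> t k ht hk; rewrite -e //; apply: h2.
- by move=> t ht; rewrite -e //; apply: h4.
- by move=> t ht; rewrite -e //; apply: h5.
Qed.

End TimeReversal.

Theorem lemma2 (R : realFieldType) (T L l : nat) (Cu Cl V Vb : R)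
  (hT : (0 < T)%N) (hL : (0 < L)%N) (hl : (0 < l)%N)
  (hCuCl : Cl < Cu) (hCl : 0 < Cl) (hV : 0 < V) (hVbV : Vb + V <= Cu)
  (hClVb : Cl < Vb) (hVbClV : Vb < Cl + V) :
  forall x y : nat -> R,
    inP T L l Cu Cl V Vb x y <-> inP' T L l Cu Cl V Vb x y.
Proof.
move=> x y; rewrite inP'E; split; first exact: inP_rev.
by move/inP_rev/eq_inP; apply=> t; apply: time_revK.
Qed.
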